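(* Let $A$ be a simple type and let $\theta = (\theta_Q)_Q$ be a family with $\theta_Q \in D_Q(A)$ for every finite set $Q$. Then the following are equivalent: (i) $\theta$ is a profinite $\lambda$-term, i.e. for every partial surjection $f \colon Q \twoheadrightarrow Q'$ between finite sets, $(\theta_Q, \theta_{Q'}) \in [\![A]\!]_f$; (ii) $\theta$ is a parametric family, i.e. for all finite sets $Q, Q'$ and every relation $R \subseteq Q \times Q'$, $(\theta_Q, \theta_{Q'}) \in [\![A]\!]_R$.
   Context: Simple types are generated from a base type $o$ by $\Rightarrow$. $\Lambda(A)$ is the set of closed simply typed $\lambda$-terms of type $A$ modulo $\beta\eta$. For a finite set $Q$: $[\![o]\!]_Q = Q$, $[\![A\Rightarrow B]\!]_Q$ = all functions $[\![A]\!]_Q \to [\![B]\!]_Q$, and $[\![M]\!]_Q \in [\![A]\!]_Q$ is the standard interpretation of $M \in \Lambda(A)$. The set of definable elements is $D_Q(A) = \{[\![M]\!]_Q : M \in \Lambda(A)\}$. For relations $S \subseteq P \times P'$, $R \subseteq Q \times Q'$, define $S \Rightarrow R \subseteq (P \to Q) \times (P' \to Q')$ as $\{(g,h) : \forall x\,S\,y,\ g(x)\,R\,h(y)\}$. For $R \subseteq Q \times Q'$ the logical relation $[\![A]\!]_R \subseteq [\![A]\!]_Q \times [\![A]\!]_{Q'}$ is defined by $[\![o]\!]_R = R$ and $[\![A \Rightarrow B]\!]_R = [\![A]\!]_R \Rightarrow [\![B]\!]_R$. A partial surjection $f \colon Q \twoheadrightarrow Q'$ is a relation that is the graph of a partial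 function surjective onto $Q'$. *)

From mathcomp Require Import all_boot.
Set Implicit Arguments.
Unset Strict Implicit.
Unset Printing Implicit Defensive.

Inductive ty : Type := o : ty | arr : ty -> ty -> ty.

Fixpoint sem (Q : Type) (A : ty) : Type :=
  match A with
  | o => Q
  | arr A B => sem Q A -> sem Q B
  end.

Inductive var : list ty -> ty -> Type :=
| VZ (G : list ty) (A : ty) : var (A :: G) A
| VS (G : list ty) (A B : ty) : var G A -> var (B :: G) A.

Inductive term : list ty -> ty -> Type :=
| TVar (G : list ty) (A : ty) : var G A -> term G A
| TLam (G : list ty) (A B : ty) : term (A :: G) B -> term G (arr A B)
| TApp (G : list ty) (A B : ty) : term G (arr A B) -> term G A -> term G B.

Fixpoint env (Q : Type) (G : list ty) : Type :=
  match G with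
  | nil => unit
  | A :: G => (sem Q A * env Q G)%type
  end.

Fixpoint lookup (Q : Type) (G : list ty) (A : ty) (v : var G A) : env Q G -> sem Q A :=
  match v in var G A return env Q G -> sem Q A with
  | VZ _ _ => fun e => e.1
  | VS _ _ _ v => fun e => lookup v e.2
  end.

Fixpoint eval (Q : Type) (G : list ty) (A : ty) (M : term G A) : env Q G -> sem Q A :=
  match M in term G A return env Q G -> sem Q A with
  | TVar _ _ v => fun e => lookup v e
  | TLam _ _ _ M => fun e x => eval M (x, e)
  | TApp _ _ _ M N => fun e => (eval M e) (eval N e)
  end.

Definition interp (Q : Type) (A : ty) (M : term nil A) : sem Q A := eval M tt.

Definition definable (Q : Type) (A : ty) (x : sem Q A) : Prop :=
  exists M : term nil A, interp Q M = x.

Fixpoint logrel (Q Q' : Type) (R : Q -> Q' -> Prop) (A : ty) {struct A} :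
    sem Q A -> sem Q' A -> Prop :=
  match A return sem Q A -> sem Q' A -> Prop with
  | o => R
  | arr A1 B1 => fun g h =>
      forall (x : sem Q A1) (y : sem Q' A1),
        @logrel Q Q' R A1 x y -> @logrel Q Q' R B1 (g x) (h y)
  end.
Arguments logrel {Q Q'} R A _ _.

Definition partial_surjection (Q Q' : Type) (f : Q -> Q' -> Prop) : Prop :=
  (forall x y y', f x y -> f x y' -> y = y') /\ (forall y, exists x, f x y).

Definition profinite (A : ty) (theta : forall Q : finType, sem Q A) : Prop :=
  forall (Q Q' : finType) (f : Q -> Q' -> Prop),
    partial_surjection f -> logrel f A (theta Q) (theta Q').

Definition parametric (A : ty) (theta : forall Q : finType, sem Q A) : Prop :=
  forall (Q Q' : finType) (R : Q -> Q' -> Prop), logrel R A (theta Q) (theta Q').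

From mathcomp Require Import all_boot.
From Stdlib Require Import Classical ClassicalEpsilon FunctionalExtensionality.

Set Implicit Arguments.
Unset Strict Implicit.
Unset Printing Implicit Defensive.

(* By the fundamental lemma, the interpretations [[M]]_Q and [[M]]_Q' of a
   closed term are related by every logical relation.  Conversely, a partial
   surjection f : P ->> Q lifts to a partial surjection [[A]]_f at every type,
   so [[A]]_f relates [[M]]_P to [[M]]_Q and to nothing else.  Hence if theta
   is profinite and theta_P = [[M]]_P, then theta_Q = [[M]]_Q for every Q
   embedding into P.  Choosing P = 1 + Q + Q' (the extra point keeps every
   [[B]]_P inhabited) exhibits theta_Q and theta_Q' as interpretations of the
   same term, which every relation R then relates. *)

Fixpoint envrel (Q Q' : Type) (R : Q -> Q' -> Prop) (G : list ty) :
    env Q G -> env Q' G -> Prop :=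
  match G return env Q G -> env Q' G -> Prop with
  | nil => fun _ _ => True
  | A :: G => fun e e' => logrel R A e.1 e'.1 /\ @envrel Q Q' R G e.2 e'.2
  end.

Section FundamentalLemma.

Variables (Q Q' : Type) (R : Q -> Q' -> Prop).

Lemma lookup_logrel (G : list ty) (A : ty) (v : var G A) e e' :
  envrel R e e' -> logrel R A (lookup v e) (lookup v e').
Proof. by elim: v e e' => [{}G {}A | {}G {}A B v IHv] [x e] [x' e'] /= [Rx Re]; auto. Qed.

Lemma eval_logrel (G : list ty) (A : ty) (M : term G A) e e' :
  envrel R e e' -> logrel R A (eval M e) (eval M e').
Proof.
elim: M e e' => [{}G {}A v | {}G {}A B M IHM | {}G {}A B M IHM N IHN] e e' Re /=.
- exact: lookup_logrel.
- by move=> x x' Rx; apply: IHM.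
- by apply: IHM => //; apply: IHN.
Qed.

Lemma interp_logrel (A : ty) (M : term nil A) :
  logrel R A (interp Q M) (interp Q' M).
Proof. exact: eval_logrel. Qed.

End FundamentalLemma.

Lemma sem_inhabited (P : Type) (A : ty) : inhabited P -> inhabited (sem P A).
Proof. by elim: A => [//| A _ B IHB] /IHB [b]; constructor => _. Qed.

Section PartialSurjectionLifting.

Variables (P Q : Type) (f : P -> Q -> Prop).
Hypotheses (P_inhabited : inhabited P) (f_ps : partial_surjection f).

Lemma logrel_partial_surjection (A : ty) : partial_surjection (logrel f A).
Proof.
elim: A => [//| A [fA_fun fA_surj] B [fB_fun fB_surj]]; split.
- move=> g h h' Rgh Rgh'; apply: functional_extensionality => y.
  have [x Rxy] := fA_surj y.
  exact: fB_fun (Rgh x y Rxy) (Rgh' x y Rxy).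
- move=> h.
  have lift_pointwise (x : sem P A) :
      exists b, forall y, logrel f A x y -> logrel f B b (h y).
  { case: (classic (exists y, logrel f A x y)) => [[y0 Rxy0] | no_image].
    - have [b Rb] := fB_surj (h y0).
      by exists b => y Rxy; rewrite (fA_fun x y y0 Rxy Rxy0).
    - have [b] := sem_inhabited B P_inhabited.
      by exists b => y Rxy; case: no_image; exists y. }
  have [g Rg] := choice _ lift_pointwise.
  by exists g => x y; apply: Rg.
Qed.

Lemma logrel_interp_eq (A : ty) (M : term nil A) (y : sem Q A) :
  logrel f A (interp P M) y -> y = interp Q M.
Proof.
move=> Ry; have [fA_fun _] := logrel_partial_surjection A.
exact: fA_fun Ry (interp_logrel f M).
Qed.

End PartialSurjectionLifting.

Lemma inverse_partial_surjection (P Q : Type) (g : Q -> P) :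
  injective g -> partial_surjection (fun p q => p = g q).
Proof. by move=> g_inj; split=> [_ y y' -> /g_inj | y]; [| exists (g y)]. Qed.

Lemma profinite_definable_eq (A : ty) (theta : forall Q : finType, sem Q A)
    (P Q : finType) (g : Q -> P) (M : term nil A) :
  profinite theta -> inhabited P -> injective g ->
  theta P = interp P M -> theta Q = interp Q M.
Proof.
move=> theta_pro P_inhabited g_inj thetaP.
have g_ps := inverse_partial_surjection g_inj.
apply: (logrel_interp_eq P_inhabited g_ps); rewrite -thetaP.
exact: theta_pro.
Qed.

Theorem theoremB (A : ty) (theta : forall Q : finType, sem Q A) :
  (forall Q : finType, definable (theta Q)) ->
  (profinite theta <-> parametric theta).
Proof.
move=> theta_def; split=> [theta_pro Q Q' R | theta_par Q Q' f _]; last exact: theta_par.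
pose P : finType := option (Q + Q').
have [M thetaP] := theta_def P.
have P_inhabited : inhabited P by constructor; exact: None.
have inl_inj : injective (fun q : Q => Some (inl q) : P) by move=> x y [].
have inr_inj : injective (fun q : Q' => Some (inr q) : P) by move=> x y [].
rewrite (profinite_definable_eq theta_pro P_inhabited inl_inj (esym thetaP)).
rewrite (profinite_definable_eq theta_pro P_inhabited inr_inj (esym thetaP)).
exact: interp_logrel.
Qed.
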